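(* Let $C$ be an $X$-completely transitive code in $H(m,q)$. Then $(m+1)|X|\ge q^m$.
   Context: $H(m,q)$ is the Hamming graph whose vertices are the $m$-tuples over an alphabet $Q$ of size $q$, two vertices adjacent iff they differ in exactly one coordinate; a code is a set $C$ of vertices, $d$ is Hamming distance, $\rho=\max_\alpha d(\alpha,C)$ its covering radius and $C_i=\{\alpha: d(\alpha,C)=i\}$. For a subgroup $X$ of the automorphism group of $H(m,q)$ stabilising $C$ setwise, $C$ is $X$-completely transitive if $X$ acts transitively on each of $C,C_1,\dots,C_\rho$. *)

From mathcomp Require Import all_boot all_order all_fingroup.
Set Implicit Arguments. Unset Strict Implicit. Unset Printing Implicit Defensive.

Definition hvert (m q : nat) := {ffun 'I_m -> 'I_q}.

Definition hdist (m q : nat) (x y : hvert m q) : nat := #|[set i | x i != y i]|.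

Definition hadj (m q : nat) (x y : hvert m q) : bool := hdist x y == 1.

Definition hamming_aut (m q : nat) : {set {perm hvert m q}} :=
  [set g : {perm hvert m q} | [forall x, forall y, hadj (g x) (g y) == hadj x y]].

(* distance from a vertex to a code (meaningful for nonempty C; hdist <= m) *)
Definition dist_code (m q : nat) (C : {set hvert m q}) (a : hvert m q) : nat :=
  \big[minn/m]_(c in C) hdist a c.

Definition cov_radius (m q : nat) (C : {set hvert m q}) : nat :=
  \max_(a : hvert m q) dist_code C a.

Definition code_layer (m q : nat) (C : {set hvert m q}) (i : nat) : {set hvert m q} :=
  [set a | dist_code C a == i].

Definition completely_transitive (m q : nat) (X : {group {perm hvert m q}})
    (C : {set hvert m q}) : Prop :=
  [/\ X \subset hamming_aut m q,
      (forall g, g \in X -> [set g x | x in C] = C) &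
      forall i, i <= cov_radius C -> [transitive X, on code_layer C i | 'P]].

From mathcomp Require Import all_boot all_order all_fingroup.

(* The layers C_0, ..., C_m partition the vertex set, since no distance
   exceeds m.  Each layer C_i with i <= rho is a single X-orbit, so it has at
   most |X| elements, and the layers beyond rho are empty. *)

Lemma card_le_transitive {aT : finGroupType} {D : {group aT}} {rT : finType}
    (to : action D rT) (A : {set aT}) (S : {set rT}) :
  [transitive A, on S | to] -> #|S| <= #|A|.
Proof. by case/imsetP=> x _ ->; apply: leq_imset_card. Qed.

Lemma card_sum_level_sets {T : finType} {n : nat} {f : T -> nat} :
  (forall x, f x <= n) -> #|T| = \sum_(i < n.+1) #|[set x | f x == i]|.
Proof.
move=> f_le; rewrite -sum1_card.
rewrite (partition_big (fun x => inord (f x) : 'I_n.+1) predT) //=.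
apply: eq_bigr => i _; rewrite sum1_card; apply: eq_card => x.
by rewrite inE unfold_in /= inordK ?ltnS.
Qed.

Lemma card_hvert {m q : nat} : #|hvert m q| = q ^ m.
Proof. by rewrite card_ffun !card_ord. Qed.

Lemma hdist_le {m q : nat} (x y : hvert m q) : hdist x y <= m.
Proof. by rewrite -[leqRHS]card_ord max_card. Qed.

Lemma dist_code_le {m q : nat} (C : {set hvert m q}) (a : hvert m q) :
  dist_code C a <= m.
Proof.
apply: (big_ind (fun d => d <= m)) => // [d e d_le _ | c _].
  by rewrite geq_min d_le.
exact: hdist_le.
Qed.

Lemma code_layer_gt_cov_radius {m q : nat} (C : {set hvert m q}) (i : nat) :
  cov_radius C < i -> code_layer C i = set0.
Proof.
move=> rho_lt_i; apply/setP=> a; rewrite !inE; apply/negbTE.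
by rewrite neq_ltn (leq_ltn_trans (leq_bigmax a)).
Qed.

Lemma card_code_layer_le {m q : nat} (X : {group {perm hvert m q}})
    (C : {set hvert m q}) (i : nat) :
  completely_transitive X C -> #|code_layer C i| <= #|X|.
Proof.
case=> _ _ layer_trans.
have [i_le_rho | /code_layer_gt_cov_radius->] := leqP i (cov_radius C).
  exact: card_le_transitive (layer_trans i i_le_rho).
by rewrite cards0.
Qed.

Theorem lemma2p9 (m q : nat) (C : {set hvert m q}) (X : {group {perm hvert m q}}) :
  C != set0 -> completely_transitive X C -> q ^ m <= m.+1 * #|X|.
Proof.
move=> _ ctX.
rewrite -card_hvert (card_sum_level_sets (dist_code_le C)).
rewrite -[X in _ <= X * _]card_ord -sum_nat_const.
by apply: leq_sum => i _; apply: card_code_layer_le.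
Qed.
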